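(* Let $\mathbb{S}$ be a metric space with its Borel $\sigma$-field, let $\{\mu_n\}_{n=1,2,\ldots}$ be a sequence of measures on $\mathbb{S}$ converging weakly to a finite measure $\mu$ on $\mathbb{S}$, and let $\{f_n,g_n\}_{n=1,2,\ldots}$ be measurable $[-\infty,+\infty]$-valued functions on $\mathbb{S}$ such that $|f_n(s)|\le g_n(s)$ for all $n$ and $s\in\mathbb{S}$, and $$\limsup_{n\to\infty}\int_{\mathbb{S}} g_n(s)\,\mu_n(ds)\le\int_{\mathbb{S}}\liminf_{n\to\infty,\,s'\to s} g_n(s')\,\mu(ds)<+\infty.$$ If $\lim_{n\to\infty,\,s'\to s}f_n(s')$ exists for $\mu$-a.e. $s\in\mathbb{S}$, then $$\lim_{n\to\infty}\int_{\mathbb{S}} f_n(s)\,\mu_n(ds)=\int_{\mathbb{S}}\lim_{n\to\infty,\,s'\to s} f_n(s')\,\mu(ds).$$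
   Context: Weak convergence: $\int f\,d\mu_n\to\int f\,d\mu$ for all bounded continuous $f$. Integrals of extended-real functions are $\int f^+-\int f^-$, defined when one of these is finite; all integrals involved are assumed defined. $\liminf_{n\to\infty,s'\to s}g_n(s'):=\sup_{n\ge1,\delta>0}\inf_{m\ge n,\,s'\in B_\delta(s)}g_m(s')$, and $\lim_{n\to\infty,s'\to s}f_n(s')$ exists when this liminf for $f_n$ equals the corresponding $\limsup:=\inf_{n\ge1,\delta>0}\sup_{m\ge n,\,s'\in B_\delta(s)}f_m(s')$; $B_\delta(s)$ is the ball of radius $\delta$ about $s$. *)

From HB Require Import structures.
From mathcomp Require Import all_boot all_order all_algebra.
From mathcomp Require Import all_classical all_reals all_analysis.
From mathcomp Require Import measurable_realfun.
Set Implicit Arguments. Unset Strict Implicit. Unset Printing Implicit Defensive.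
Import Order.TTheory GRing.Theory Num.Theory.
Import numFieldNormedType.Exports.
Local Open Scope classical_set_scope.
Local Open Scope ring_scope.
Local Open Scope ereal_scope.

(* Nonempty metric spaces (pointedness is needed by the library's generated
   sigma-algebra construction; the empty case is trivial). *)
#[short(type="pointedMetricType")]
HB.structure Definition PointedMetric (K : numDomainType) :=
  { M of Metric K M & isPointed M }.

Definition borel_gen {R : realType} (T : pointedMetricType R) : set (set T) :=
  @open T.
Arguments borel_gen {R} T.
Notation Borel T := (g_sigma_algebraType (borel_gen T)).

Definition liminf2 {R : realType} {T : pointedMetricType R} (g : nat -> T -> \bar R)
  (s : T) : \bar R :=
  ereal_sup ((fun q : nat * R => ereal_inf ((fun p : nat * T => g p.1 p.2) @`
                         [set p : nat * T | (q.1 <= p.1)%N /\ @ball R T s q.2 p.2]))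
            @` [set q : nat * R | (0 < q.2)%R]).

Definition limsup2 {R : realType} {T : pointedMetricType R} (f : nat -> T -> \bar R)
  (s : T) : \bar R :=
  ereal_inf ((fun q : nat * R => ereal_sup ((fun p : nat * T => f p.1 p.2) @`
                         [set p : nat * T | (q.1 <= p.1)%N /\ @ball R T s q.2 p.2]))
            @` [set q : nat * R | (0 < q.2)%R]).

(* the limit lim_{n -> oo, s' -> s} f_n(s'): the common value of liminf2 and
   limsup2 wherever these agree (we use liminf2 as representative). *)
Definition lim2 {R : realType} {T : pointedMetricType R} (f : nat -> T -> \bar R)
  (s : T) : \bar R := liminf2 f s.

Definition weakly_converges {R : realType} {T : pointedMetricType R}
  (mu_ : nat -> {measure set (Borel T) -> \bar R})
  (mu : {measure set (Borel T) -> \bar R}) : Prop :=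
  forall phi : T -> R, continuous phi -> (exists M : R, forall x, (`|phi x| <= M)%R) ->
    (fun n => \int[mu_ n]_(x in [set: Borel T]) (phi x)%:E) @ \oo -->
      \int[mu]_(x in [set: Borel T]) (phi x)%:E.

From HB Require Import structures.
From mathcomp Require Import all_boot all_order all_algebra.
From mathcomp Require Import all_classical all_reals all_analysis.
From mathcomp Require Import measurable_realfun.
From mathcomp Require Import lra.
Import Order.TTheory GRing.Theory Num.Theory.
Import numFieldNormedType.Exports.
Local Open Scope classical_set_scope.
Local Open Scope ring_scope.
Local Open Scope ereal_scope.

(* The key estimate is a Fatou lemma along weakly converging measures: for
   nonnegative measurable [h n], [int liminf2 h dmu <= liminf int h n dmu_n].
   The infima [ball_inf h k] of [h m] over [m >= k] and the ball of radius
   [1/(k+1)] are upper semicontinuous and increase to [liminf2 h]; each lies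
   below the lower semicontinuous [ball_sup_inf h k], which is below [h n] for
   [n >= k].  For a nonnegative lower semicontinuous [v], weak convergence
   gives [int v dmu <= liminf int v dmu_n], since [v] is the increasing limit
   of the bounded Lipschitz functions [inf_y (min (v y) j + j d(x, y))].
   Applying the Fatou lemma to [g n + f n >= 0] and cancelling the integrals of
   [g n] with the hypothesis [limsup int g n dmu_n <= int liminf2 g dmu < +oo]
   yields [int liminf2 f dmu <= liminf int f n dmu_n]; the same bound for
   [- f n], with [liminf2 f = limsup2 f] a.e., gives the matching upper bound. *)

Section extended_reals.
Context {R : realType}.
Implicit Types (u v : (\bar R)^nat) (l : \bar R).

Lemma lee_lt_EFin (x y : \bar R) : (forall r : R, r%:E < x -> r%:E <= y) -> x <= y.
Proof.
case: x => [r| |] xy; last exact: leNye.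
- by apply/lee_subgt0Pr => e e0; apply: xy; rewrite lte_fin ltrBlDr ltrDl.
- case: y xy => [r| |] xy; last 2 first.
  + exact: leey.
  + by have := xy 0%R (ltry _).
  by have := xy (r + 1)%R (ltry _); rewrite lee_fin gerDl ler10.
Qed.

Lemma lee_absl (x y : \bar R) : (`|x| <= y) = (- y <= x <= y).
Proof.
by case: x y => [x| |] [y| |]; rewrite /= ?lee_fin ?ler_norml ?leey ?leNye ?andbT.
Qed.

Lemma limn_einf_le_near u v : (\forall n \near \oo, u n <= v n) ->
  limn_einf u <= limn_einf v.
Proof.
move=> [N _ uv]; rewrite !limn_einf_lim.
apply: lee_lim; [exact: is_cvg_einfs|exact: is_cvg_einfs|].
exists N => // n /= Nn; apply: le_ereal_inf_tmp => _ [m /= nm <-].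
apply: le_trans (uv m (leq_trans Nn nm)).
by apply: ereal_inf_lbound; exists m.
Qed.

Lemma limn_esup_lt u l : limn_esup u < l -> \forall n \near \oo, u n < l.
Proof.
rewrite limn_esup_lim (cvg_lim _ (@cvg_esups_inf _ u))// => /ereal_inf_lt[_ [N _ <-] uNl].
exists N => // n /= Nn; apply: le_lt_trans uNl.
by apply: ereal_sup_ubound; exists n.
Qed.

Lemma limn_einfD_le u v : limn_esup u \is a fin_num ->
  limn_einf (fun n => u n + v n) <= limn_esup u + limn_einf v.
Proof.
rewrite !limn_einf_lim limn_esup_lim => ufin.
have cvD : (fun n => esups u n + einfs v n) @ \oo --> limn (esups u) + limn (einfs v).
  by apply: cvgeD; [exact: fin_num_adde_defr|exact: is_cvg_esups|exact: is_cvg_einfs].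
rewrite -(cvg_lim _ cvD)//; apply: lee_lim; [exact: is_cvg_einfs|exact: cvgP cvD|].
have /fine_cvgP[+ _] : esups u @ \oo --> (fine (limn (esups u)))%:E.
  by rewrite fineK//; exact: is_cvg_esups.
apply: filterS => n Sfin /=; rewrite -leeBlDl//.
apply: le_ereal_inf_tmp => _ [m /= nm <-]; rewrite leeBlDl//.
apply: le_trans (_ : u m + v m <= _).
  by apply: ereal_inf_lbound; exists m.
by rewrite leeD2r//; apply: ereal_sup_ubound; exists m.
Qed.

Lemma cvg_limn_einf_esup u l : l <= limn_einf u -> limn_esup u <= l ->
  u @ \oo --> l.
Proof.
move=> linf supl.
have infE : limn_einf u = l.
  by apply/le_anti; rewrite linf (le_trans (limn_einf_sup u)).
have supE : limn_esup u = l.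
  by apply/le_anti; rewrite supl (le_trans _ (limn_einf_sup u)).
apply: (@squeeze_cvge _ _ _ _ (einfs u) _ (esups u)).
- apply: nearW => n; apply/andP; split.
    by apply: ereal_inf_lbound; exists n => /=.
  by apply: ereal_sup_ubound; exists n => /=.
- by rewrite -infE limn_einf_lim; exact: is_cvg_einfs.
- by rewrite -supE limn_esup_lim; exact: is_cvg_esups.
Qed.

End extended_reals.

Section integrals.
Context {d} {X : measurableType d} {R : realType}.
Variable mu : {measure set X -> \bar R}.

Lemma cvg_monotone_convergence_to (f : (X -> \bar R)^nat) (F : X -> \bar R) :
  (forall n, measurable_fun [set: X] (f n)) -> (forall n x, 0 <= f n x) ->
  (forall x, nondecreasing_seq (f ^~ x)) -> (forall x, f ^~ x @ \oo --> F x) ->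
  (fun n => \int[mu]_(x in [set: X]) f n x) @ \oo --> \int[mu]_(x in [set: X]) F x.
Proof.
move=> mf f0 nd_f fF.
have := @cvg_monotone_convergence _ X R mu _ measurableT f mf (fun n x _ => f0 n x)
  (fun x _ => nd_f x).
congr (_ --> _); apply: eq_integral => x _.
exact: cvg_lim (fF x).
Qed.

Lemma le_integral_ge0r (D : set X) (f1 f2 : X -> \bar R) : measurable D ->
  measurable_fun D f1 -> measurable_fun D f2 ->
  (forall x, D x -> 0 <= f2 x) -> (forall x, D x -> f1 x <= f2 x) ->
  \int[mu]_(x in D) f1 x <= \int[mu]_(x in D) f2 x.
Proof.
move=> mD mf1 mf2 f20 f12; rewrite integralE.
apply: le_trans (geeDl _ _) _; first by rewrite oppe_le0 integral_ge0.
apply: ge0_le_integral => //; first exact: measurable_funepos.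
by move=> x Dx; rewrite funeposE ge_max f12 ?f20.
Qed.

End integrals.

Section ball_approximations.
Context {R : realType} {T : pointedMetricType R}.
Implicit Types (h : nat -> T -> \bar R) (v : T -> \bar R).

Lemma open_Borel_measurable (A : set T) : open A -> measurable (A : set (Borel T)).
Proof. exact: sub_sigma_algebra. Qed.

Lemma lower_semicontinuous_Borel_measurable v :
  lower_semicontinuous v -> measurable_fun [set: Borel T] (v : Borel T -> \bar R).
Proof.
move=> /lower_semicontinuousP vlsc.
apply: (measurability _ (ErealGenOInfty.measurableE R)).
move=> /= _ [_ [a ->]] <-; apply: measurableI => //.
by rewrite preimage_itvoy; exact: open_Borel_measurable.
Qed.

Lemma upper_semicontinuous_Borel_measurable v :
  lower_semicontinuous (\- v) -> measurable_fun [set: Borel T] (v : Borel T -> \bar R).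
Proof.
move=> /lower_semicontinuous_Borel_measurable mNv.
rewrite (_ : v = \- (\- v)); last by apply/funext => x /=; rewrite oppeK.
exact: measurableT_comp mNv.
Qed.

Definition radius (k : nat) : R := k.+1%:R^-1.

Lemma radius_gt0 k : (0 < radius k)%R.
Proof. by rewrite invr_gt0 ltr0n. Qed.

Lemma radius_le k k' : (k <= k')%N -> (radius k' <= radius k)%R.
Proof. by move=> kk'; rewrite lef_pV2 ?posrE ?ltr0n// ler_nat ltnS. Qed.

Lemma radius_lt (e : R) : (0 < e)%R -> exists k, (radius k < e)%R.
Proof.
move=> e0; exists (Num.truncn e^-1).
rewrite /radius -[X in (_ < X)%R]invrK ltf_pV2 ?posrE ?ltr0n ?invr_gt0//.
exact: truncnS_gt.
Qed.

Definition ball_inf h (k : nat) (s : T) : \bar R :=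
  ereal_inf ((fun p : nat * T => h p.1 p.2) @`
     [set p : nat * T | (k <= p.1)%N /\ ball s (radius k) p.2]).

Definition ball_sup_inf h (k : nat) (x : T) : \bar R :=
  ereal_sup [set ball_inf h k s | s in ball x (radius k)].

Lemma nondecreasing_ball_inf h s : nondecreasing_seq (ball_inf h ^~ s).
Proof.
move=> k k' kk'; apply: ereal_inf_le_tmp => _ [p [kp sp] <-]; exists p => //; split.
  exact: leq_trans kp.
by move: sp; apply: le_ball; exact: radius_le.
Qed.

Lemma liminf2_ball_inf h s : liminf2 h s = ereal_sup (range (ball_inf h ^~ s)).
Proof.
apply/le_anti/andP; split.
- apply: ge_ereal_sup => _ [q /= q0 <-].
  have [k0 k0q] := @radius_lt q.2 q0.
  pose k := maxn q.1 k0.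
  apply: (@le_trans _ _ (ball_inf h k s)); last by apply: ereal_sup_ubound; exists k.
  apply: ereal_inf_le_tmp => _ [p [kp sp] <-]; exists p => //; split.
    exact: leq_trans (leq_maxl _ _) kp.
  move: sp; apply: le_ball; apply/ltW/(le_lt_trans _ k0q)/radius_le.
  exact: leq_maxr.
- apply: ge_ereal_sup => _ [k _ <-]; apply: ereal_sup_ubound.
  by exists (k, radius k) => //=; exact: radius_gt0.
Qed.

Lemma cvg_ball_inf h s : ball_inf h ^~ s @ \oo --> liminf2 h s.
Proof.
rewrite liminf2_ball_inf; apply: ereal_nondecreasing_cvgn.
exact: nondecreasing_ball_inf.
Qed.

Lemma ball_shrink (x y z : T) (r : R) :
  ball x r z -> ball x (r - mdist x z) y -> ball y r z.
Proof.
rewrite !ballEmdist /= ltrBrDr => _ xy; rewrite (le_lt_trans (metric_triangle _ x _))//.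
by rewrite metric_sym.
Qed.

Lemma upper_semicontinuous_ball_inf h k : lower_semicontinuous (\- ball_inf h k).
Proof.
move=> x a /=; rewrite lteNr => /ereal_inf_lt [_ [p [kp xp] <-] hpa].
exists (ball x (radius k - mdist x p.2)%R).
  by apply: nbhsx_ballx; move: xp; rewrite ballEmdist subr_gt0.
move=> y xy /=; rewrite lteNr; apply: le_lt_trans hpa.
by apply: ereal_inf_lbound; exists p => //; split => //; exact: ball_shrink xy.
Qed.

Lemma lower_semicontinuous_ball_sup_inf h k : lower_semicontinuous (ball_sup_inf h k).
Proof.
move=> x a /ereal_sup_gt [_ [s xs <-] ahs].
exists (ball x (radius k - mdist x s)%R).
  by apply: nbhsx_ballx; move: xs; rewrite ballEmdist subr_gt0.
move=> y xy; apply: lt_le_trans ahs _; apply: ereal_sup_ubound.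
by exists s => //; exact: ball_shrink xy.
Qed.

Lemma ball_inf_le_sup_inf h k x : ball_inf h k x <= ball_sup_inf h k x.
Proof. by apply: ereal_sup_ubound; exists x => //; exact: ballxx (radius_gt0 k). Qed.

Lemma ball_sup_inf_le h k n x : (k <= n)%N -> ball_sup_inf h k x <= h n x.
Proof.
move=> kn; apply: ge_ereal_sup => _ [s xs <-].
by apply: ereal_inf_lbound; exists (n, x) => //; split => //; exact: ball_sym.
Qed.

Lemma measurable_ball_inf h k :
  measurable_fun [set: Borel T] (ball_inf h k : Borel T -> \bar R).
Proof.
apply: upper_semicontinuous_Borel_measurable; exact: upper_semicontinuous_ball_inf.
Qed.

Lemma measurable_ball_sup_inf h k :
  measurable_fun [set: Borel T] (ball_sup_inf h k : Borel T -> \bar R).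
Proof.
apply: lower_semicontinuous_Borel_measurable.
exact: lower_semicontinuous_ball_sup_inf.
Qed.

Lemma measurable_liminf2 h :
  measurable_fun [set: Borel T] (liminf2 h : Borel T -> \bar R).
Proof.
apply: (emeasurable_fun_cvg (fun k => ball_inf h k : Borel T -> \bar R)).
  exact: measurable_ball_inf.
by move=> x _; exact: cvg_ball_inf.
Qed.

Lemma ball_inf_ge0 h k x : (forall n y, 0 <= h n y) -> 0 <= ball_inf h k x.
Proof. by move=> h0; apply: le_ereal_inf_tmp => _ [p _ <-]; exact: h0. Qed.

Lemma liminf2_ge0 h x : (forall n y, 0 <= h n y) -> 0 <= liminf2 h x.
Proof.
move=> h0; rewrite liminf2_ball_inf; apply: le_ereal_sup_tmp.
by exists (ball_inf h 0 x); [exists 0%N|exact: ball_inf_ge0].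
Qed.

Lemma le_liminf2 h1 h2 s :
  (forall n x, h1 n x <= h2 n x) -> liminf2 h1 s <= liminf2 h2 s.
Proof.
move=> h12; rewrite !liminf2_ball_inf; apply: ge_ereal_sup => _ [k _ <-].
apply: le_ereal_sup_tmp; exists (ball_inf h2 k s); first by exists k.
apply: le_ereal_inf_tmp => _ [p kp <-].
by apply: le_trans (h12 p.1 p.2); apply: ereal_inf_lbound; exists p.
Qed.

Lemma liminf2N h s : liminf2 (fun n x => - h n x) s = - limsup2 h s.
Proof.
rewrite /liminf2 /limsup2 -ereal_supN image_comp; congr ereal_sup.
by apply: eq_imagel => q _ /=; rewrite -ereal_infN image_comp.
Qed.

Lemma limsup2N h s : limsup2 (fun n x => - h n x) s = - liminf2 h s.
Proof.
apply/eqP; rewrite -eqe_oppLR -liminf2N; apply/eqP; congr liminf2.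
by apply/funext => n; apply/funext => x; rewrite oppeK.
Qed.

Lemma le_liminf2D h1 h2 h s : (forall n x, h1 n x + h2 n x <= h n x) ->
  liminf2 h1 s + liminf2 h2 s <= liminf2 h s.
Proof.
move=> h12; have [->|sNy] := eqVneq (liminf2 h1 s + liminf2 h2 s) -oo.
  exact: leNye.
have h12_def : liminf2 h1 s +? liminf2 h2 s.
  by move: sNy; rewrite /adde_def; case: (liminf2 h1 s) => [?| |]; case: (liminf2 h2 s).
apply: (lee_cvg_to (cvgeD h12_def (cvg_ball_inf h1 s) (cvg_ball_inf h2 s))
  (cvg_ball_inf h s)).
apply: nearW => k; apply: le_ereal_inf_tmp => _ [p kp <-].
by apply: le_trans (h12 p.1 p.2); apply: leeD; apply: ereal_inf_lbound; exists p.
Qed.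

End ball_approximations.

Section pasch_hausdorff.
Context {R : realType} {T : pointedMetricType R}.
Variable v : T -> \bar R.
Hypothesis v_ge0 : forall y, 0 <= v y.

Definition pasch_hausdorff (j : nat) (x : T) : \bar R :=
  ereal_inf [set Order.min (v y) j%:R%:E + (j%:R * mdist x y)%:E | y in [set: T]].

Lemma pasch_hausdorff_ge0 j x : 0 <= pasch_hausdorff j x.
Proof.
apply: le_ereal_inf_tmp => _ [y _ <-]; apply: adde_ge0.
  by rewrite le_min v_ge0 lee_fin ler0n.
by rewrite lee_fin mulr_ge0 ?ler0n ?mdist_ge0.
Qed.

Lemma pasch_hausdorff_le j x : pasch_hausdorff j x <= Order.min (v x) j%:R%:E.
Proof. by apply: ereal_inf_lbound; exists x => //; rewrite mdistxx mulr0 adde0. Qed.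

Lemma pasch_hausdorff_fin_num j x : pasch_hausdorff j x \is a fin_num.
Proof.
rewrite ge0_fin_numE ?pasch_hausdorff_ge0//.
by rewrite (le_lt_trans (pasch_hausdorff_le j x))// gt_min ltry orbT.
Qed.

Lemma pasch_hausdorff_lipschitz j x x' :
  pasch_hausdorff j x <= pasch_hausdorff j x' + (j%:R * mdist x x')%:E.
Proof.
rewrite -leeBlDr//; apply: le_ereal_inf_tmp => _ [y _ <-].
rewrite leeBlDr//; apply: le_trans (ereal_inf_lbound _) _; first by exists y.
rewrite -addeA leeD2l// -EFinD lee_fin -mulrDr ler_wpM2l ?ler0n//.
by rewrite (le_trans (metric_triangle _ x' _))// metric_sym addrC.
Qed.

Lemma nondecreasing_pasch_hausdorff x :
  nondecreasing_seq (pasch_hausdorff ^~ x).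
Proof.
move=> j j' jj'; apply: le_ereal_inf_tmp => _ [y _ <-].
apply: le_trans (ereal_inf_lbound _) _; first by exists y.
apply: leeD; first by rewrite le_min !ge_min lexx lee_fin ler_nat jj' !orbT.
by rewrite lee_fin ler_wpM2r ?mdist_ge0// ler_nat.
Qed.

Definition pasch_hausdorffR (j : nat) (x : T) : R := fine (pasch_hausdorff j x).

Lemma pasch_hausdorffRE j x : (pasch_hausdorffR j x)%:E = pasch_hausdorff j x.
Proof. by rewrite fineK// pasch_hausdorff_fin_num. Qed.

Lemma pasch_hausdorffR_lipschitz j x x' :
  (`|pasch_hausdorffR j x - pasch_hausdorffR j x'| <= j%:R * mdist x x')%R.
Proof.
have := pasch_hausdorff_lipschitz j x x'; have := pasch_hausdorff_lipschitz j x' x.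
rewrite -!pasch_hausdorffRE -!EFinD !lee_fin metric_sym => h1 h2.
by rewrite ler_norml; apply/andP; split; lra.
Qed.

Lemma continuous_pasch_hausdorffR j : continuous (pasch_hausdorffR j).
Proof.
move=> x; apply/cvgrPdist_le => e e0.
have : nbhs x (ball x (e / j.+1%:R)) by apply: nbhsx_ballx; rewrite divr_gt0.
apply: filterS => y; rewrite ballEmdist /= => xy.
apply: le_trans (pasch_hausdorffR_lipschitz j x y) _.
apply: le_trans (_ : j.+1%:R * mdist x y <= _)%R.
  by rewrite ler_wpM2r ?mdist_ge0// ler_nat.
by rewrite -ler_pdivlMl ?ltr0n// mulrC ltW.
Qed.

Lemma pasch_hausdorffR_bounded j x : (`|pasch_hausdorffR j x| <= j%:R)%R.
Proof.
rewrite ger0_norm -lee_fin pasch_hausdorffRE ?pasch_hausdorff_ge0//.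
by rewrite (le_trans (pasch_hausdorff_le j x))// ge_min lexx orbT.
Qed.

Lemma measurable_pasch_hausdorff j :
  measurable_fun [set: Borel T] (pasch_hausdorff j : Borel T -> \bar R).
Proof.
apply: lower_semicontinuous_Borel_measurable; apply/lower_semicontinuousP => c.
have -> : [set x | c%:E < pasch_hausdorff j x] =
    pasch_hausdorffR j @^-1` [set r | (c < r)%R].
  by apply/seteqP; split => x /=; rewrite -pasch_hausdorffRE lte_fin.
by move/continuousP : (continuous_pasch_hausdorffR j); apply; exact: open_gt.
Qed.

Hypothesis v_lsc : lower_semicontinuous v.

(* On a ball of radius [del] around [x] where [v > c], every term of the
   infimum is at least [min c j = c]; off that ball the distance term
   [j * mdist x y >= j * del] is at least [c]. *)
Lemma pasch_hausdorff_ge x (c : R) : c%:E < v x ->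
  exists j, c%:E <= pasch_hausdorff j x.
Proof.
move=> cv; have [c0|c0] := leP c 0%R.
  by exists 0%N; apply: le_trans (pasch_hausdorff_ge0 0 x); rewrite lee_fin.
have [V /nbhs_ballP[del del0 delV] Vc] := v_lsc _ _ cv.
pose j := (Num.truncn c + Num.truncn (c / del))%N.+1.
have cj : (c <= j%:R)%R.
  apply/ltW/(lt_le_trans (truncnS_gt c)).
  by rewrite ler_nat ltnS leq_addr.
have cjdel : (c <= j%:R * del)%R.
  rewrite -ler_pdivrMr//; apply/ltW/(lt_le_trans (truncnS_gt _)).
  by rewrite ler_nat ltnS leq_addl.
exists j; apply: le_ereal_inf_tmp => _ [y _ <-].
have [xy|xy] := ltP (mdist x y) del.
  have Vy : V y by apply: delV; rewrite ballEmdist.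
  rewrite -[c%:E]adde0 leeD ?lee_fin ?mulr_ge0 ?ler0n ?mdist_ge0//.
  by rewrite le_min lee_fin cj ltW ?Vc.
rewrite -[c%:E]add0e leeD ?le_min ?v_ge0 ?lee_fin ?ler0n//.
by rewrite (le_trans cjdel)// ler_wpM2l ?ler0n.
Qed.

Lemma cvg_pasch_hausdorff x : pasch_hausdorff ^~ x @ \oo --> v x.
Proof.
suff -> : v x = ereal_sup (range (pasch_hausdorff ^~ x)).
  exact/ereal_nondecreasing_cvgn/nondecreasing_pasch_hausdorff.
apply/le_anti/andP; split.
  apply: lee_lt_EFin => c /pasch_hausdorff_ge[j cj].
  by apply: le_trans cj _; apply: ereal_sup_ubound; exists j.
apply: ge_ereal_sup => _ [j _ <-]; apply: le_trans (pasch_hausdorff_le j x) _.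
by rewrite ge_min lexx.
Qed.

End pasch_hausdorff.

Section weak_convergence.
Context {R : realType} {T : pointedMetricType R}.
Context {mu_ : nat -> {measure set (Borel T) -> \bar R}}
  {mu : {measure set (Borel T) -> \bar R}}.
Hypothesis mu_weak : weakly_converges mu_ mu.

Lemma portmanteau_lower_semicontinuous (v : T -> \bar R) :
  (forall y, 0 <= v y) -> lower_semicontinuous v ->
  \int[mu]_(x in [set: Borel T]) v x <=
    limn_einf (fun n => \int[mu_ n]_(x in [set: Borel T]) v x).
Proof.
move=> v_ge0 v_lsc.
have cv := cvg_monotone_convergence_to mu _ _ (measurable_pasch_hausdorff v v_ge0)
  (pasch_hausdorff_ge0 v v_ge0) (nondecreasing_pasch_hausdorff v)
  (cvg_pasch_hausdorff v v_ge0 v_lsc).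
rewrite -(cvg_lim _ cv)//; apply: lime_le; first exact: cvgP cv.
apply: nearW => j.
have phE : (fun x => (pasch_hausdorffR v j x)%:E) = pasch_hausdorff v j.
  by apply/funext => x; exact: pasch_hausdorffRE.
have := @mu_weak _ (continuous_pasch_hausdorffR v v_ge0 j)
  (ex_intro _ _ (pasch_hausdorffR_bounded v v_ge0 j)).
rewrite phE => /cvg_limn_einf_sup[<- _]; apply: limn_einf_le_near; apply: nearW => n.
apply: ge0_le_integral => //.
- by move=> x _; exact: pasch_hausdorff_ge0.
- exact: measurable_pasch_hausdorff.
- exact: lower_semicontinuous_Borel_measurable.
- by move=> x _; rewrite (le_trans (pasch_hausdorff_le v j x))// ge_min lexx.
Qed.

Lemma weak_fatou (h : nat -> T -> \bar R) : (forall n x, 0 <= h n x) ->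
  (forall n, measurable_fun [set: Borel T] (h n : Borel T -> \bar R)) ->
  \int[mu]_(x in [set: Borel T]) liminf2 h x <=
    limn_einf (fun n => \int[mu_ n]_(x in [set: Borel T]) h n x).
Proof.
move=> h_ge0 mh.
have cv := cvg_monotone_convergence_to mu _ _ (measurable_ball_inf h)
  (fun k x => ball_inf_ge0 h k x h_ge0) (nondecreasing_ball_inf h) (cvg_ball_inf h).
rewrite -(cvg_lim _ cv)//; apply: lime_le; first exact: cvgP cv.
apply: nearW => k.
have sup_ge0 x : 0 <= ball_sup_inf h k x.
  exact: le_trans (ball_inf_ge0 h k x h_ge0) (ball_inf_le_sup_inf h k x).
apply: le_trans (_ : _ <= \int[mu]_(x in [set: Borel T]) ball_sup_inf h k x) _.
  apply: ge0_le_integral => //.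
  - by move=> x _; exact: ball_inf_ge0.
  - exact: measurable_ball_inf.
  - exact: measurable_ball_sup_inf.
  - by move=> x _; exact: ball_inf_le_sup_inf.
apply: le_trans (portmanteau_lower_semicontinuous _ sup_ge0
  (lower_semicontinuous_ball_sup_inf h k)) _.
apply: limn_einf_le_near; exists k => // n /= kn.
apply: ge0_le_integral => //; first exact: measurable_ball_sup_inf.
by move=> x _; exact: ball_sup_inf_le.
Qed.

Section dominated.
Context {f g : nat -> T -> \bar R}.
Hypothesis mf : forall n, measurable_fun [set: Borel T] (f n : Borel T -> \bar R).
Hypothesis mg : forall n, measurable_fun [set: Borel T] (g n : Borel T -> \bar R).
Hypothesis fg : forall n s, `|f n s| <= g n s.
Hypothesis g_lim : limn_esup (fun n => \int[mu_ n]_(x in [set: Borel T]) g n x)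
    <= \int[mu]_(x in [set: Borel T]) liminf2 g x.
Hypothesis liminf2_g_fin : \int[mu]_(x in [set: Borel T]) liminf2 g x < +oo.
Hypothesis f_lim2 : {ae mu, forall s : Borel T, liminf2 f s = limsup2 f s}.

Let g_ge0 n x : 0 <= g n x. Proof. exact: le_trans (abse_ge0 _) (fg n x). Qed.

Lemma integrable_liminf2_dominating :
  mu.-integrable [set: Borel T] (liminf2 g : Borel T -> \bar R).
Proof.
apply/integrableP; split; first exact: measurable_liminf2.
under eq_integral do rewrite gee0_abs ?liminf2_ge0//.
exact: liminf2_g_fin.
Qed.

Lemma integrable_liminf2_dominated :
  mu.-integrable [set: Borel T] (liminf2 f : Borel T -> \bar R).
Proof.
apply/integrableP; split; first exact: measurable_liminf2.
apply: le_lt_trans liminf2_g_fin; apply: ae_ge0_le_integral => //.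
- by apply: measurableT_comp => //; exact: measurable_liminf2.
- by move=> x _; exact: liminf2_ge0.
- exact: measurable_liminf2.
apply: filterS f_lim2 => s fs _; rewrite lee_absl; apply/andP; split.
  rewrite fs leeNl -liminf2N; apply: le_liminf2 => n x.
  by rewrite (le_trans _ (fg n x))// -abseN lee_abs.
by apply: le_liminf2 => n x; exact: le_trans (lee_abs _) (fg n x).
Qed.

Lemma near_integrable_dominated : \forall n \near \oo,
  (mu_ n).-integrable [set: Borel T] (f n) /\ (mu_ n).-integrable [set: Borel T] (g n).
Proof.
have := limn_esup_lt _ _ (le_lt_trans g_lim liminf2_g_fin).
apply: filterS => n gn_fin.
have ig : (mu_ n).-integrable [set: Borel T] (g n).
  apply/integrableP; split => //.
  by under eq_integral do rewrite gee0_abs ?g_ge0//.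
split => //; apply: le_integrable ig => // x _.
by rewrite (gee0_abs (g_ge0 n x)) fg.
Qed.

Lemma integral_liminf2N :
  \int[mu]_(x in [set: Borel T]) liminf2 (fun n y => - f n y) x =
    - \int[mu]_(x in [set: Borel T]) liminf2 f x.
Proof.
rewrite -integralN; last exact/integrable_add_def/integrable_liminf2_dominated.
apply: ae_eq_integral => //.
- exact: measurable_liminf2.
- by apply: measurableT_comp => //; exact: measurable_liminf2.
by apply: filterS f_lim2 => s fs _; rewrite liminf2N fs.
Qed.

Lemma liminf_integral_dominated :
  \int[mu]_(x in [set: Borel T]) liminf2 f x <=
    limn_einf (fun n => \int[mu_ n]_(x in [set: Borel T]) f n x).
Proof.
(* The truncation only matters where [g n x = +oo] and [f n x = -oo]. *)
pose h n x := maxe (g n x + f n x) 0.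
have h_ge0 n x : 0 <= h n x by rewrite le_max lexx orbT.
have mh n : measurable_fun [set: Borel T] (h n : Borel T -> \bar R).
  by apply: measurable_maxe => //; exact: emeasurable_funD.
have iG := integrable_liminf2_dominating.
have iF := integrable_liminf2_dominated.
set J := \int[mu]_(x in [set: Borel T]) liminf2 g x.
have J_fin : J \is a fin_num := integrable_fin_num measurableT iG.
have JK_le : J + \int[mu]_(x in [set: Borel T]) liminf2 f x <=
    \int[mu]_(x in [set: Borel T]) liminf2 h x.
  rewrite /J -integralD//; apply: le_integral_ge0r => //.
  - by apply: emeasurable_funD; exact: measurable_liminf2.
  - exact: measurable_liminf2.
  - by move=> x _; exact: liminf2_ge0.
  - by move=> x _; apply: le_liminf2D => n y; rewrite le_max lexx.
have hD : \forall n \near \oo, \int[mu_ n]_(x in [set: Borel T]) h n x =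
    \int[mu_ n]_(x in [set: Borel T]) g n x + \int[mu_ n]_(x in [set: Borel T]) f n x.
  apply: filterS near_integrable_dominated => n [ifn ign].
  rewrite -integralD//; apply: ae_eq_integral => //; first exact: emeasurable_funD.
  apply: filterS (integrable_ae measurableT ign) => x /(_ I) gfin _.
  rewrite /h max_l// -(subee gfin) leeD2l// leeNl.
  by rewrite (le_trans _ (fg n x))// -abseN lee_abs.
have esup_fin : limn_esup (fun n => \int[mu_ n]_(x in [set: Borel T]) g n x)
    \is a fin_num.
  rewrite ge0_fin_numE; first exact: le_lt_trans g_lim liminf2_g_fin.
  by apply: limf_esup_ge0 => // n; exact: integral_ge0.
rewrite -(@leeD2lE _ J)//; apply: le_trans JK_le _.
apply: le_trans (weak_fatou _ h_ge0 mh) _.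
apply: le_trans (limn_einf_le_near _ _ _) _; first by apply: filterS hD => n ->; exact: lexx.
by apply: le_trans (limn_einfD_le _ _ esup_fin) _; rewrite leeD2r.
Qed.

End dominated.
End weak_convergence.

Theorem corollary2p10 (R : realType) (T : pointedMetricType R)
  (mu_ : nat -> {measure set (Borel T) -> \bar R})
  (mu : {measure set (Borel T) -> \bar R})
  (f g : nat -> Borel T -> \bar R) :
  weakly_converges mu_ mu ->
  mu [set: Borel T] < +oo ->
  (forall n, measurable_fun [set: Borel T] (f n)) ->
  (forall n, measurable_fun [set: Borel T] (g n)) ->
  (forall n s, `|f n s| <= g n s) ->
  limn_esup (fun n => \int[mu_ n]_(s in [set: Borel T]) g n s)
    <= \int[mu]_(s in [set: Borel T]) liminf2 g s ->
  \int[mu]_(s in [set: Borel T]) liminf2 g s < +oo ->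
  {ae mu, forall s, liminf2 f s = limsup2 f s} ->
  (fun n => \int[mu_ n]_(s in [set: Borel T]) f n s) @ \oo -->
    \int[mu]_(s in [set: Borel T]) lim2 f s.
Proof.
move=> mu_weak _ mf mg fg g_lim g_fin f_lim2; rewrite /lim2.
pose fN n x := - f n x.
have mfN n : measurable_fun [set: Borel T] (fN n) by exact: measurableT_comp.
have fNg n s : `|fN n s| <= g n s by rewrite abseN.
have fN_lim2 : {ae mu, forall s : Borel T, liminf2 fN s = limsup2 fN s}.
  apply: (@filterS _ _ (ae_filter_ringOfSetsType mu) _ _ _ f_lim2) => s fs.
  by rewrite liminf2N limsup2N fs.
apply: cvg_limn_einf_esup.
  exact: (liminf_integral_dominated mu_weak mf mg fg g_lim g_fin f_lim2).
rewrite -[limn_esup _]oppeK -limn_einfN leeNl.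
rewrite -(integral_liminf2N fg g_fin f_lim2).
apply: le_trans (liminf_integral_dominated mu_weak mfN mg fNg g_lim g_fin fN_lim2) _.
apply: limn_einf_le_near.
apply: filterS (near_integrable_dominated mf mg fg g_lim g_fin) => n [ifn _].
by rewrite /= integralN//; exact: integrable_add_def.
Qed.
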